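(* Let $\tau$ be a veering triangulation of $M$ with dual graph $\Gamma$. Identifying $H^1(M;\mathbb{R})\cong H_2(M,\partial M;\mathbb{R})$ by Lefschetz duality, $$\mathrm{cone}_2(\tau)=\mathrm{cone}_1^\vee(\Gamma),$$ i.e. a class is carried by $\tau^{(2)}$ if and only if its algebraic intersection with every closed curve positively transverse to $\tau^{(2)}$ is nonnegative. Moreover every integral class in $\mathrm{cone}_1^\vee(\Gamma)\cap H^1(M;\mathbb{Z})$ is represented by an embedded surface carried by $\tau^{(2)}$.
   Context: $\tau$ is a veering triangulation of $M$ (taut ideal triangulation with cooriented faces, each tetrahedron having two bottom and two top faces, angle sum $2\pi$ around edges, with a consistent right/left veer on edges). The 2-skeleton $\tau^{(2)}$ is a transversely oriented branched surface; a nonnegative cycle on $\tau^{(2)}$ is an assignment of nonnegative real weights to faces such that for each edge $e$ the sum of weights of faces incident to $e$ on one side of $e$ equals the sum on the other side; it defines a class in $H_2(M,\partial M;\mathbb{R})$, and $\mathrm{cone}_2(\tau)$ is the set of classes so represented (carried classes). A surface is carried if it lies in a fibered neighborhood of $\tau^{(2)}$ positively transverse to the fibers. The dual graph $\Gamma$: a vertex inside each tetrahedron and for each face a directed edge crossing it in the direction of its coorientation; directed cycles of $\Gamma$ are closed curves positively transverse to $\tau^{(2)}$, and every such closed transversal is homotopic to one. $\mathrm{cone}_1(\Gamma)\subset H_1(M;\mathbb{R})$ is the nonnegative span of classes of directed cycles of $\Gamma$, and $\mathrm{cone}_1^\vee(\Gamma)=\{u\in H^1(M;\mathbb{R}): u(v)\ge0\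 \forall v\in\mathrm{cone}_1(\Gamma)\}$. *)

(* Combinatorial model of a veering (ideal, taut)
   triangulation, its 2-skeleton as a branched surface, the dual graph Gamma,
   and H^1(M;R) computed as the first cohomology of the dual cell complex
   (cochains on faces = 1-cochains on Gamma). *)
From HB Require Import structures.
From mathcomp Require Import all_boot all_order all_algebra.
From mathcomp Require Import fingroup perm.
From mathcomp Require Import reals.
Set Implicit Arguments. Unset Strict Implicit. Unset Printing Implicit Defensive.
Import Order.TTheory GRing.Theory Num.Theory.
Local Open Scope ring_scope.

Section Veering.
Variable T : finType.                                  (* tetrahedra *)
(* a "slot" (t,i) is face i of tetrahedron t (face i = opposite vertex i) *)
Variable glue : T * 'I_4 -> T * 'I_4.
Variable gp : T * 'I_4 -> {perm 'I_4}.                 (* vertex gluing map *)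
Variable top : T * 'I_4 -> bool.                       (* coorientation: is the face a top face of its tet *)

(* oriented edge occurrences (t,k,l) : edge from vertex k to vertex l of t *)
Definition oedge := (T * 'I_4 * 'I_4)%type.

Definition oe_adj : rel oedge := fun x y =>
  [exists i : 'I_4, [&& i != x.1.2, i != x.2, (glue (x.1.1, i)).1 == y.1.1,
       gp (x.1.1, i) x.1.2 == y.1.2 & gp (x.1.1, i) x.2 == y.2]].

(* two oriented edge occurrences represent the same oriented edge of M *)
Definition edge_equiv : rel oedge := connect oe_adj.

Definition tet_adj : rel T := fun t s => [exists i : 'I_4, (glue (t, i)).1 == s].

(* an oriented ideal triangulation (of the compact 3-manifold M whose
   interior is the glued-up space minus the ideal vertices) *)
Definition ideal_triangulation : Prop :=
  (forall s, glue (glue s) = s) /\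
  (forall s, glue s != s) /\
  (forall s, gp s s.2 = (glue s).2) /\
  (forall s v, gp (glue s) (gp s v) = v) /\
  (forall s, odd_perm (gp s)) /\                      (* orientation *)
  (forall t k l, k != l -> ~~ edge_equiv (t, k, l) (t, l, k)) /\
  (forall t s, connect tet_adj t s).

Definition taut_coorientation : Prop :=
  (forall t, #|[set i : 'I_4 | top (t, i)]| = 2) /\
  (forall s, top (glue s) = ~~ top s).

Definition pi_angle (x : oedge) : bool :=
  [forall i : 'I_4, forall j : 'I_4,
     [&& i != x.1.2, i != x.2, j != x.1.2 & j != x.2] ==>
     (top (x.1.1, i) == top (x.1.1, j))].

(* angle sum 2 pi around every edge: exactly two pi angles in every edge class *)
Definition angle_sum_2pi : Prop :=
  forall o : oedge, o.1.2 != o.2 ->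
    #|[set x : oedge | edge_equiv o x && pi_angle x]| = 2.

(* parity of the ordering (a,b,c,d) of the vertices of a tet, vertex order
   0,1,2,3 being positively oriented *)
Definition even4 (a b c d : 'I_4) : bool :=
  ~~ odd ((b < a)%N + (c < a)%N + (d < a)%N + (c < b)%N + (d < b)%N + (d < c)%N).

(* veering: a 2-colouring (right/left veer) of the edges of M such that in
   every tet, viewed from above, going anticlockwise around the equator from
   an end of the top diagonal the colours alternate  right,left,right,left *)
Definition veering_colouring (col : oedge -> bool) : Prop :=
  [/\ forall x y, edge_equiv x y -> col x = col y,
      forall t k l, col (t, k, l) = col (t, l, k)
    & forall t (a b c d : 'I_4), uniq [:: a; b; c; d] ->
        top (t, c) -> top (t, d) ->   (* {a,b} is the top diagonal *)
        [/\ col (t, a, c) = even4 a b c d, col (t, b, d) = even4 a b c d,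
            col (t, a, d) = ~~ even4 a b c d & col (t, b, c) = ~~ even4 a b c d]].

Definition veering_triangulation : Prop :=
  [/\ ideal_triangulation, taut_coorientation, angle_sum_2pi
    & exists col, veering_colouring col].

Variable R : realType.

(* a real function on slots that is a function on faces of tau *)
Definition face_fun (w : T * 'I_4 -> R) : Prop := forall s, w (glue s) = w s.

(* going around the oriented edge x (right hand rule), face i of x.1.1 is the
   face through which one leaves the tet *)
Definition is_exit (x : oedge) (i : 'I_4) : bool :=
  [&& i != x.1.2, i != x.2 &
      [exists j : 'I_4, [&& j != x.1.2, j != x.2, j != i & even4 x.1.2 x.2 i j]]].

(* sums of weights of the faces incident to the edge o on its two sides:
   faces crossed upward (resp. downward) by a small loop encircling o *)
Definition side_sum (w : T * 'I_4 -> R) (o : oedge) (up : bool) : R :=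
  \sum_(x : oedge | edge_equiv o x)
     \sum_(i : 'I_4 | is_exit x i && (top (x.1.1, i) == up)) w (x.1.1, i).

(* switch (branch) equations = cocycle condition in the dual complex *)
Definition switch_cond (w : T * 'I_4 -> R) : Prop :=
  forall o : oedge, o.1.2 != o.2 -> side_sum w o true = side_sum w o false.

(* cycles on tau^(2) / 1-cocycles on the dual complex *)
Definition tau_cycle (w : T * 'I_4 -> R) : Prop := face_fun w /\ switch_cond w.

(* coboundary of a 0-cochain f on the vertices of Gamma (tetrahedra) *)
Definition delta (f : T -> R) (s : T * 'I_4) : R :=
  if top s then f (glue s).1 - f s.1 else f s.1 - f (glue s).1.

(* equal classes in H^1(M;R) *)
Definition cohomologous (u v : T * 'I_4 -> R) : Prop :=
  exists f : T -> R, forall s, v s = u s + delta f s.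

(* [u] lies in cone_2(tau): represented by a nonnegative cycle on tau^(2) *)
Definition in_cone2 (u : T * 'I_4 -> R) : Prop :=
  exists w, [/\ tau_cycle w, forall s, 0 <= w s & cohomologous u w].

(* directed cycles of Gamma: a directed edge of Gamma is a top slot (t,i),
   from t to the tet (glue (t,i)).1 above the face *)
Definition directed_cycle (c : seq (T * 'I_4)) : Prop :=
  [/\ c != [::], all top c, path.cycle (fun s s' : T * 'I_4 => (glue s).1 == s'.1) c
    & uniq (map fst c)].

Definition in_cone1_dual (u : T * 'I_4 -> R) : Prop :=
  forall c, directed_cycle c -> 0 <= \sum_(s <- c) u s.

Definition integral_class (u : T * 'I_4 -> R) : Prop :=
  exists z : T * 'I_4 -> int,
    tau_cycle (fun s => (z s)%:~R) /\ cohomologous (fun s => (z s)%:~R) u.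

(* [u] is represented by an embedded surface carried by tau^(2), i.e. by a
   nonnegative integral weight system on tau^(2) *)
Definition carried_surface_class (u : T * 'I_4 -> R) : Prop :=
  exists n : T * 'I_4 -> nat,
    tau_cycle (fun s => (n s)%:R) /\ cohomologous u (fun s => (n s)%:R).

End Veering.

From HB Require Import structures.
From mathcomp Require Import all_boot all_order all_algebra.
From mathcomp Require Import fingroup perm.
From mathcomp Require Import reals.
From mathcomp Require Import ring lra.
Set Implicit Arguments. Unset Strict Implicit. Unset Printing Implicit Defensive.
Import Order.TTheory GRing.Theory Num.Theory.
Local Open Scope ring_scope.

(* Coboundaries always satisfy the switch conditions: around an edge of M the
   exit faces of the successive tetrahedra chain the edge occurrences into a
   permutation of its class, so the terms g(next) - g(current) telescope.
   Coboundaries also vanish on directed cycles of Gamma, which gives one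
   inclusion.  Conversely, if u is nonnegative on every directed cycle, the
   minimal u-weight g(v) of a simple directed walk starting at v satisfies the
   triangle inequality g(tail s) <= u(s) + g(head s) for every edge s of Gamma,
   i.e. u + delta g >= 0.  For integral u the potential g is integral, giving
   nonnegative integer weights. *)

(* Unlike [enum] and [#|_|], quantification over this explicit list of the
   elements of ['I_4] reduces under [vm_compute]; the finite facts about the
   faces of a tetrahedron below are decided this way. *)
Definition ords4 : seq 'I_4 :=
  [:: @Ordinal 4 0 isT; @Ordinal 4 1 isT; @Ordinal 4 2 isT; @Ordinal 4 3 isT].

Lemma mem_ords4 (i : 'I_4) : i \in ords4.
Proof. by case: i => [[|[|[|[|//]]]] ?]; rewrite !inE -!val_eqE. Qed.

Lemma forall4P (P : pred 'I_4) : reflect (forall i, P i) (all P ords4).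
Proof. by apply: (iffP allP) => [P4 i|P4 i _]; [apply: P4; apply: mem_ords4|apply: P4]. Qed.

Definition exit4 (k l i : 'I_4) : bool :=
  [&& i != k, i != l & has (fun j => [&& j != k, j != l, j != i & even4 k l i j]) ords4].

Lemma is_exitE (T : finType) (x : oedge T) (i : 'I_4) : is_exit x i = exit4 x.1.2 x.2 i.
Proof.
congr [&& _, _ & _]; apply/existsP/hasP => [[j Pj]|[j _ Pj]]; last by exists j.
by exists j; first exact: mem_ords4.
Qed.

Definition exit_face (k l : 'I_4) : 'I_4 := nth k [seq i <- ords4 | exit4 k l i] 0.
Definition entry_face (k l : 'I_4) : 'I_4 :=
  nth k [seq i <- ords4 | [&& i != k, i != l & ~~ exit4 k l i]] 0.

Lemma exit4P (k l i : 'I_4) : k != l -> exit4 k l i = (i == exit_face k l).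
Proof.
have : all (fun k => all (fun l => all (fun i =>
  (k != l) ==> (exit4 k l i == (i == exit_face k l))) ords4) ords4) ords4.
  by vm_compute.
by move=> /forall4P/(_ k)/forall4P/(_ l)/forall4P/(_ i)/implyP H /H/eqP.
Qed.

Lemma entry_faceP (k l i : 'I_4) :
  k != l -> i != k -> i != l -> ~~ exit4 k l i -> i = entry_face k l.
Proof.
have : all (fun k => all (fun l => all (fun i =>
  [&& k != l, i != k, i != l & ~~ exit4 k l i] ==> (i == entry_face k l)) ords4) ords4) ords4.
  by vm_compute.
move=> /forall4P/(_ k)/forall4P/(_ l)/forall4P/(_ i)/implyP H kl ik il ni.
by apply/eqP/H; rewrite kl ik il.
Qed.

Lemma exit4_even4 (k l i j : 'I_4) : uniq [:: k; l; i; j] -> exit4 k l i = even4 k l i j.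
Proof.
have : all (fun k => all (fun l => all (fun i => all (fun j =>
  uniq [:: k; l; i; j] ==> (exit4 k l i == even4 k l i j)) ords4) ords4) ords4) ords4.
  by vm_compute.
by move=> /forall4P/(_ k)/forall4P/(_ l)/forall4P/(_ i)/forall4P/(_ j)/implyP H /H/eqP.
Qed.

Lemma even4_tperm (a b k l i j : 'I_4) : a != b -> uniq [:: k; l; i; j] ->
  even4 (tperm a b k) (tperm a b l) (tperm a b i) (tperm a b j) = ~~ even4 k l i j.
Proof.
rewrite /tperm !permE /=.
have : all (fun a => all (fun b => all (fun k => all (fun l => all (fun i => all (fun j =>
  ((a != b) && uniq [:: k; l; i; j]) ==>
  (even4 ([fun z => z with a |-> b, b |-> a] k) ([fun z => z with a |-> b, b |-> a] l)
     ([fun z => z with a |-> b, b |-> a] i) ([fun z => z with a |-> b, b |-> a] j)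
   == ~~ even4 k l i j)) ords4) ords4) ords4) ords4) ords4) ords4.
  by vm_compute.
move=> /forall4P/(_ a)/forall4P/(_ b)/forall4P/(_ k).
move=> /forall4P/(_ l)/forall4P/(_ i)/forall4P/(_ j)/implyP H ab u.
by apply/eqP/H; rewrite ab.
Qed.

Lemma even4_perm (p : {perm 'I_4}) (k l i j : 'I_4) : uniq [:: k; l; i; j] ->
  even4 (p k) (p l) (p i) (p j) = even4 k l i j (+) odd_perm p.
Proof.
have [ts -> dts] := prod_tpermP p.
elim: ts dts k l i j => [|[a b] ts IHts] /= => [_|/andP[ab dts]] k l i j u.
  by rewrite big_nil !perm1 odd_perm1 addbF.
have u' : uniq [:: tperm a b k; tperm a b l; tperm a b i; tperm a b j].
  by rewrite -[[:: tperm a b k; _; _; _]]/(map _ [:: k; l; i; j]) (map_inj_uniq perm_inj).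
by rewrite big_cons !permM odd_mul_tperm ab IHts // even4_tperm // addbA addbT.
Qed.

(* Gluing maps reverse orientation, so the face through which one leaves a
   tetrahedron turning around an edge is the one through which one enters the
   next tetrahedron. *)
Lemma odd_perm_exit_face (p : {perm 'I_4}) (k l : 'I_4) : odd_perm p -> k != l ->
  p (exit_face k l) = entry_face (p k) (p l).
Proof.
move=> odd_p kl; set e := exit_face k l.
have /and3P[ek el /hasP[j _ /and4P[jk jl je ev]]] : exit4 k l e by rewrite exit4P.
have u : uniq [:: k; l; e; j].
  rewrite /= !inE !negb_or (eq_sym k e) (eq_sym k j) (eq_sym l e) (eq_sym l j) (eq_sym e j).
  by rewrite kl ek el jk jl je.
have pu : uniq [:: p k; p l; p e; p j].
  by rewrite -[[:: p k; _; _; _]]/(map p [:: k; l; e; j]) (map_inj_uniq perm_inj).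
apply: entry_faceP; rewrite ?(inj_eq perm_inj) //.
by rewrite (exit4_even4 pu) even4_perm // ev odd_p.
Qed.

Section AroundAnEdge.
Variables (T : finType) (glue : T * 'I_4 -> T * 'I_4) (gp : T * 'I_4 -> {perm 'I_4}).
Hypothesis glueK : involutive glue.
Hypothesis gp_face : forall s, gp s s.2 = (glue s).2.
Hypothesis gp_odd : forall s, odd_perm (gp s).

Definition edge_step (x : oedge T) : oedge T :=
  let s := (x.1.1, exit_face x.1.2 x.2) in ((glue s).1, gp s x.1.2, gp s x.2).

Lemma edge_step_adj (x : oedge T) : x.1.2 != x.2 -> oe_adj glue gp x (edge_step x).
Proof.
move=> kl; apply/existsP; exists (exit_face x.1.2 x.2).
have /and3P[ek el _] : exit4 x.1.2 x.2 (exit_face x.1.2 x.2) by rewrite exit4P.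
by rewrite ek el !eqxx.
Qed.

Lemma edge_equiv_proper (o x : oedge T) :
  edge_equiv glue gp o x -> o.1.2 != o.2 -> x.1.2 != x.2.
Proof.
have proper_closed : closed (oe_adj glue gp) (fun y : oedge T => y.1.2 != y.2).
  move=> y z /existsP[i /and5P[_ _ _ /eqP kz /eqP lz]].
  by rewrite /in_mem /= -kz -lz (inj_eq perm_inj).
by move=> /(closed_connect proper_closed); rewrite /in_mem /= => <-.
Qed.

Lemma glue_edge_step_exit (x : oedge T) : x.1.2 != x.2 ->
  glue (x.1.1, exit_face x.1.2 x.2) =
  ((edge_step x).1.1, entry_face (edge_step x).1.2 (edge_step x).2).
Proof.
move=> kl; rewrite /edge_step /= -(odd_perm_exit_face (gp_odd _) kl) gp_face.
by case: (glue _).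
Qed.

Lemma edge_step_inj : {in [pred x : oedge T | x.1.2 != x.2] &, injective edge_step}.
Proof.
move=> x y kl_x kl_y exy.
have := glue_edge_step_exit kl_x; rewrite exy -(glue_edge_step_exit kl_y).
move=> /(can_inj glueK) [tx ex]; move: exy; rewrite /edge_step tx ex.
case=> /perm_inj kx /perm_inj lx.
by move: x y tx kx lx {kl_x kl_y ex} => [[? ?] ?] [[? ?] ?] /= -> -> ->.
Qed.

Lemma edge_step_class (o : oedge T) : o.1.2 != o.2 ->
  edge_step @: [set x | edge_equiv glue gp o x] = [set x | edge_equiv glue gp o x].
Proof.
move=> kl; set C := [set x | _].
have C_proper x : x \in C -> x.1.2 != x.2 by rewrite inE => /edge_equiv_proper; apply.
apply/eqP; rewrite eqEcard card_in_imset ?leqnn ?andbT; last first.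
  by move=> x y /C_proper ? /C_proper ?; apply: edge_step_inj.
apply/subsetP => _ /imsetP[x Cx ->]; rewrite inE.
apply: connect_trans (connect1 (edge_step_adj (C_proper _ Cx))).
by rewrite inE in Cx.
Qed.

Variables (top : T * 'I_4 -> bool) (R : realType).

Lemma delta_exit_sumB (f : T -> R) (x : oedge T) : x.1.2 != x.2 ->
  \sum_(i | is_exit x i && (top (x.1.1, i) == true)) delta glue top f (x.1.1, i)
  - \sum_(i | is_exit x i && (top (x.1.1, i) == false)) delta glue top f (x.1.1, i)
  = f (edge_step x).1.1 - f x.1.1.
Proof.
move=> kl; have exitE i : is_exit x i = (i == exit_face x.1.2 x.2).
  by rewrite is_exitE exit4P.
under eq_bigl => i do rewrite exitE.
under [X in _ - X]eq_bigl => i do rewrite exitE.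
rewrite !big_mkcondr !big_pred1_eq /delta /edge_step /=.
by case: top; rewrite /= ?subr0 ?sub0r ?opprB.
Qed.

Lemma switch_cond_delta (f : T -> R) : switch_cond glue gp top (delta glue top f).
Proof.
move=> o kl; apply/eqP; rewrite -subr_eq0 /side_sum -sumrB.
under eq_bigr => x ox do rewrite delta_exit_sumB ?(edge_equiv_proper ox) //.
set C := [set x | edge_equiv glue gp o x].
have sum_over_C (F : oedge T -> R) :
    \sum_(x | edge_equiv glue gp o x) F x = \sum_(x in C) F x.
  by apply: eq_bigl => x; rewrite inE.
rewrite sumrB subr_eq0 !sum_over_C; apply/eqP.
rewrite -(big_imset (fun y : oedge T => f y.1.1)); first by rewrite /C (edge_step_class kl).
move=> x y; rewrite !inE => /edge_equiv_proper/(_ kl) px /edge_equiv_proper/(_ kl) py.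
exact: edge_step_inj.
Qed.

End AroundAnEdge.

Fixpoint seqs_upto (S : finType) (n : nat) : seq (seq S) :=
  if n is n'.+1 then [::] :: [seq x :: s | x <- enum S, s <- seqs_upto S n'] else [:: [::]].

Lemma mem_seqs_upto (S : finType) (n : nat) (s : seq S) :
  (size s <= n)%N -> s \in seqs_upto S n.
Proof.
elim: n s => [|n IHn] [|x s] //= size_s; rewrite inE; apply/orP; right.
by apply: allpairs_f; rewrite ?mem_enum ?IHn.
Qed.

Section Potentials.
Variables (T : finType) (glue : T * 'I_4 -> T * 'I_4) (top : T * 'I_4 -> bool).
Implicit Types (v : T) (s : T * 'I_4) (p : seq (T * 'I_4)).

Definition dual_step s s' : bool := (glue s).1 == s'.1.

Fixpoint dwalk v p : bool :=
  if p is s :: p' then [&& s.1 == v, top s & dwalk (glue s).1 p'] else true.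

Definition simple_dwalk v p : bool := dwalk v p && uniq (map fst p).

Lemma dwalk_all_top v p : dwalk v p -> all top p.
Proof. by elim: p v => [|s p IHp] v //= /and3P[_ -> /IHp]. Qed.

Lemma dwalk_suffix v p1 x p2 : dwalk v (p1 ++ x :: p2) -> dwalk x.1 (x :: p2).
Proof.
elim: p1 v => [|y p1 IHp1] v /=; last by case/and3P => _ _ /IHp1.
by case/and3P => _ tx walk; rewrite eqxx tx.
Qed.

Lemma dwalk_path v p1 x p2 y z :
  (glue y).1 = v -> dwalk v (p1 ++ x :: p2) -> x.1 = z.1 -> path dual_step y (rcons p1 z).
Proof.
elim: p1 y v => [|w p1 IHp1] y v /= yv.
  by case/and3P => /eqP xv _ _ xz; rewrite andbT /dual_step yv -xv xz.
case/and3P => /eqP wv _ walk xz.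
by rewrite (IHp1 w _ erefl walk xz) andbT /dual_step yv wv.
Qed.

Variables (R : realDomainType) (u : T * 'I_4 -> R).

Definition dwalk_min v : R :=
  \big[Order.min/0]_(p <- seqs_upto _ #|T| | simple_dwalk v p) \sum_(s <- p) u s.

Lemma dwalk_min_le v p : simple_dwalk v p -> dwalk_min v <= \sum_(s <- p) u s.
Proof.
move=> sp; have size_p : (size p <= #|T|)%N.
  by case/andP: sp => _ /card_uniqP; rewrite size_map => <-; apply: max_card.
exact: ge_bigmin_seq (mem_seqs_upto size_p) sp.
Qed.

Lemma dwalk_min_attained v : exists2 p, simple_dwalk v p & dwalk_min v = \sum_(s <- p) u s.
Proof.
apply: (big_ind (fun m => exists2 p, simple_dwalk v p & m = \sum_(s <- p) u s)).
- by exists [::]; rewrite ?big_nil.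
- by move=> _ _ [p1 sp1 ->] [p2 sp2 ->]; case: leP => _; [exists p1 | exists p2].
- by move=> p sp; exists p.
Qed.

Hypothesis cycle_ge0 : forall c, directed_cycle glue top c -> 0 <= \sum_(s <- c) u s.

Lemma dwalk_min_triangle s : top s -> dwalk_min s.1 <= u s + dwalk_min (glue s).1.
Proof.
move=> ts; have [p sp ->] := dwalk_min_attained (glue s).1.
have [/mapP[x xp sx]|s_notin] := boolP (s.1 \in map fst p).
  move: sp; case/splitPr: xp sx => p1 p2 sx /andP[walk uniq_p].
  have cyc : directed_cycle glue top (s :: p1).
    split => //=.
    - by rewrite ts; move: (dwalk_all_top walk); rewrite all_cat => /andP[].
    - exact: (dwalk_path (y := s) erefl walk (esym sx)).
    - by move: uniq_p; rewrite map_cat cat_uniq /= sx negb_or => /and3P[-> /andP[-> _] _].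
  have sp2 : simple_dwalk s.1 (x :: p2).
    rewrite /simple_dwalk sx (dwalk_suffix walk) /=.
    by move: uniq_p; rewrite map_cat cat_uniq => /and3P[_ _].
  have := cycle_ge0 cyc; have := dwalk_min_le sp2.
  rewrite big_cat /= !big_cons; lra.
have sp' : simple_dwalk s.1 (s :: p).
  by case/andP: sp => walk uniq_p; rewrite /simple_dwalk /= eqxx ts walk s_notin.
by have := dwalk_min_le sp'; rewrite big_cons.
Qed.

End Potentials.

Section Coboundary.
Variables (T : finType) (glue : T * 'I_4 -> T * 'I_4) (top : T * 'I_4 -> bool).

Definition coboundary (V : zmodType) (g : T -> V) (s : T * 'I_4) : V :=
  if top s then g (glue s).1 - g s.1 else g s.1 - g (glue s).1.

Lemma delta_coboundary (R : realType) (g : T -> R) : delta glue top g = coboundary g.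
Proof. by []. Qed.

Lemma intr_coboundary (R : ringType) (g : T -> int) (s : T * 'I_4) :
  (coboundary g s)%:~R = coboundary (fun v => (g v)%:~R : R) s.
Proof. by rewrite /coboundary; case: top; rewrite rmorphB. Qed.

Lemma dual_path_heads (x : T * 'I_4) (c : seq (T * 'I_4)) :
  path (dual_step glue) x c -> map (fun s => (glue s).1) (belast x c) = map fst c.
Proof. by elim: c x => [|y c IHc] x //= /andP[/eqP-> /IHc ->]. Qed.

Lemma coboundary_cycle_sum (V : zmodType) (g : T -> V) (c : seq (T * 'I_4)) :
  directed_cycle glue top c -> \sum_(s <- c) coboundary g s = 0.
Proof.
case: c => [[]//|x c] [_ top_c cyc _].
rewrite (eq_big_seq (fun s => g (glue s).1 - g s.1)) => [|s sc]; last first.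
  by rewrite /coboundary (allP top_c s sc).
rewrite sumrB -(big_map (fun s => (glue s).1) xpredT g).
have := dual_path_heads cyc; rewrite belast_rcons => ->.
by rewrite big_map (perm_big (x :: c)) ?subrr // perm_rcons.
Qed.

Hypotheses (glueK : involutive glue) (top_glue : forall s, top (glue s) = ~~ top s).

Lemma coboundary_glue (V : zmodType) (g : T -> V) (s : T * 'I_4) :
  coboundary g (glue s) = coboundary g s.
Proof. by rewrite /coboundary top_glue glueK; case: top. Qed.

Lemma nonneg_potential (R : realDomainType) (u : T * 'I_4 -> R) :
  (forall s, u (glue s) = u s) ->
  (forall c, directed_cycle glue top c -> 0 <= \sum_(s <- c) u s) ->
  exists g : T -> R, forall s, 0 <= u s + coboundary g s.
Proof.
move=> u_glue cycle_ge0; exists (dwalk_min glue top u) => s.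
wlog ts : s / top s => [top_case|].
  have [/top_case //|nts] := boolP (top s).
  by rewrite -u_glue -coboundary_glue; apply: top_case; rewrite top_glue.
rewrite /coboundary ts addrA subr_ge0; exact: dwalk_min_triangle.
Qed.

End Coboundary.

Section CarriedClasses.
Variables (T : finType) (glue : T * 'I_4 -> T * 'I_4) (gp : T * 'I_4 -> {perm 'I_4}).
Variables (top : T * 'I_4 -> bool) (R : realType).
Implicit Types (u v : T * 'I_4 -> R).

Lemma eq_tau_cycle u v : u =1 v -> tau_cycle glue gp top u -> tau_cycle glue gp top v.
Proof.
move=> uv [u_glue u_switch]; split=> [s|o kl]; first by rewrite -!uv.
have side_sumE up : side_sum glue gp top v o up = side_sum glue gp top u o up.
  by apply: eq_bigr => x _; apply: eq_bigr => i _.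
by rewrite !side_sumE (u_switch o kl).
Qed.

Lemma tau_cycleD u v : tau_cycle glue gp top u -> tau_cycle glue gp top v ->
  tau_cycle glue gp top (fun s => u s + v s).
Proof.
move=> [u_glue u_switch] [v_glue v_switch]; split=> [s|o kl]; first by rewrite u_glue v_glue.
have side_sumD up : side_sum glue gp top (fun s => u s + v s) o up =
    side_sum glue gp top u o up + side_sum glue gp top v o up.
  by rewrite /side_sum -big_split; apply: eq_bigr => x _; rewrite -big_split.
by rewrite !side_sumD (u_switch o kl) (v_switch o kl).
Qed.

Lemma cohomologous_cycle_sum u v c : cohomologous glue top u v ->
  directed_cycle glue top c -> \sum_(s <- c) v s = \sum_(s <- c) u s.
Proof.
move=> [f uv] dc; under eq_bigr => s _ do rewrite uv.
by rewrite big_split /= delta_coboundary coboundary_cycle_sum // addr0.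
Qed.

Hypotheses (glueK : involutive glue) (gp_face : forall s, gp s s.2 = (glue s).2).
Hypotheses (gp_odd : forall s, odd_perm (gp s)) (top_glue : forall s, top (glue s) = ~~ top s).

Lemma tau_cycle_delta (f : T -> R) : tau_cycle glue gp top (delta glue top f).
Proof.
split; last exact: switch_cond_delta.
by move=> s; rewrite !delta_coboundary coboundary_glue.
Qed.

End CarriedClasses.

Theorem mainTheorem11 (T : finType) (glue : T * 'I_4 -> T * 'I_4)
    (gp : T * 'I_4 -> {perm 'I_4}) (top : T * 'I_4 -> bool) (R : realType) :
  veering_triangulation glue gp top ->
  (forall u : T * 'I_4 -> R, tau_cycle glue gp top u ->
     (in_cone2 glue gp top u <-> in_cone1_dual glue top u)) /\
  (forall u : T * 'I_4 -> R, tau_cycle glue gp top u ->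
     integral_class glue gp top u -> in_cone1_dual glue top u ->
     carried_surface_class glue gp top u).
Proof.
case=> [[glueK [_ [gp_face [_ [gp_odd _]]]]] [_ top_glue] _ _].
have delta_cycle (f : T -> R) := tau_cycle_delta glueK gp_face gp_odd top_glue f.
split=> [u u_cycle | u _ [z [z_cycle z_u]] u_cone].
  split=> [[w [_ w_ge0 u_w]] c dc | u_cone].
    by rewrite -(cohomologous_cycle_sum u_w dc) sumr_ge0.
  have [g g_ge0] := nonneg_potential glueK top_glue u_cycle.1 u_cone.
  exists (fun s => u s + delta glue top g s); split=> //; last by exists g.
  exact: tau_cycleD.
have z_glue s : z (glue s) = z s by apply: (@intr_inj R); apply: z_cycle.1.
have z_cone c : directed_cycle glue top c -> 0 <= \sum_(s <- c) z s.
  move=> dc; rewrite -(ler0z R) rmorph_sum -(cohomologous_cycle_sum z_u dc).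
  exact: u_cone.
have [g g_ge0] := nonneg_potential glueK top_glue z_glue z_cone.
pose G v : R := (g v)%:~R.
have n_eq s :
    ((absz (z s + coboundary glue top g s))%:R : R) = (z s)%:~R + delta glue top G s.
  by rewrite natr_absz ger0_norm // intrD intr_coboundary.
exists (fun s => absz (z s + coboundary glue top g s)); split.
  exact: eq_tau_cycle (fun s => esym (n_eq s)) (tau_cycleD z_cycle (delta_cycle G)).
have [f0 u_eq] := z_u; exists (fun v => G v - f0 v) => s.
by rewrite n_eq u_eq /delta; case: (top s); ring.
Qed.
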